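(* Let $\mathcal B=(\mathcal T,A,p,c)$ be a BMDP with $n=|\mathcal T|$, let $F:[0,\infty]^n\to[0,\infty]^n$ be its fixed-point operator, let $\mathbf c^*\in[0,\infty]^n$ be the vector of optimal expected total costs, and let $\mathbf x^0=\mathbf 0$, $\mathbf x^{k+1}=F(\mathbf x^k)$ for $k\ge 0$. Then: (a) $F$ is monotone (i.e. $\mathbf x\le\mathbf y$ implies $F(\mathbf x)\le F(\mathbf y)$) and continuous (i.e. $F(\lim_k \mathbf y^k)=\lim_k F(\mathbf y^k)$ for every nondecreasing sequence $(\mathbf y^k)$ in $[0,\infty]^n$); consequently $\mathbf 0\le\mathbf x^k\le\mathbf x^{k+1}$ for all $k\ge0$. (b) $\mathbf c^*=F(\mathbf c^* )$. (c) $\mathbf x^k\le\mathbf c^*$ for all $k\ge 0$. (d) For every $\mathbf c'\in[0,\infty]^n$ with $\mathbf c'=F(\mathbf c')$, we have $\mathbf c^*\le\mathbf c'$. (e) $\mathbf c^*=\lim_{k\to\infty}\mathbf x^k$.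
   Context: A branching Markov decision process (BMDP) is a tuple $\mathcal B=(\mathcal T,A,p,c)$ where $\mathcal T$ is a finite set of types, $A$ is a finite set of actions, $p:\mathcal T\times A\to \mathrm{Dist}(\mathcal T^* )$ is a partial function assigning to some pairs $(q,a)$ a probability distribution with finite support over the set $\mathcal T^*$ of finite lists (words) of types, and $c:\mathcal T\times A\to\mathbb R_{>0}$ is a cost function with strictly positive values. $A(q)$ denotes the (nonempty) set of actions $a$ for which $p(q,a)$ is defined. A branching Markov chain (BMC) is a BMDP with $|A(q)|=1$ for every $q$. For a list $\alpha$, $|\alpha|$ is its length and $\alpha_i$ its $i$-th element; $\varepsilon$ is the empty list. Semantics: the BMDP induces an MDP whose states are lists $\alpha\in\mathcal T^*$ (of ''entities''). In state $\alpha$ the enabled actions are pairs $(i,a)$ with $1\le i\le|\alpha|$ and $a\in A(\alpha_i)$; taking $(i,a)$ incurs cost $c(\alpha_i,a)$ and moves to $\alpha_1\cdots\alpha_{i-1}\cdot\beta\cdot\alpha_{i+1}\cdots\alpha_{|\alpha|}$ with probability $p(\alpha_i,a)(\beta)$, for each $\beta\in\mathcal T^*$. The state $\varepsilon$ has no actions; once reached, the process stays there forever and incurs no further cost. A strategy maps each finite history (path) to a probability distribution over the actions enabled in its last state; a strategy $\sigma$ and initial state $\alpha$ induce a probability measure on runs. $\mathrm{ETotal}_N(\alpha,\sigma)$ denotes the expected sum of the costs incurred in the first $N$ steps; $\mathrm{ETotal}_*(\alpha,\sigma)=\lim_{N\to\infty}\mathrm{ETotal}_N(\alpha,\sigma)\in[0,\infty]$;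 and $\mathrm{ETotal}_*(\alpha)=\inf_\sigma \mathrm{ETotal}_*(\alpha,\sigma)$ over all strategies. The vector $\mathbf c^*\in[0,\infty]^{\mathcal T}$ is defined by $\mathbf c^*_q=\mathrm{ETotal}_*(q)$ (starting from the one-entity list $q$). The fixed-point operator $F:[0,\infty]^{\mathcal T}\to[0,\infty]^{\mathcal T}$ is $F(\mathbf x)_q=\min_{a\in A(q)}\Big(c(q,a)+\sum_{\alpha\in\mathcal T^*}p(q,a)(\alpha)\sum_{i=1}^{|\alpha|}\mathbf x_{\alpha_i}\Big)$, with conventions $0\cdot\infty=0$ and $r+\infty=\infty$. Vectors are compared componentwise. *)

From HB Require Import structures.
From mathcomp Require Import all_boot all_order all_algebra.
From mathcomp Require Import all_classical all_reals all_analysis.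
Set Implicit Arguments. Unset Strict Implicit. Unset Printing Implicit Defensive.
Import Order.TTheory GRing.Theory Num.Theory.
Local Open Scope ring_scope.

(* A BMDP over a finite set of types T and a finite set of actions A.
   - enab q a  : a \in A(q)  (p(q,a) is defined)
   - trans q a : the finite-support distribution p(q,a) over T^*, given as a
                 finite list of weighted outcomes (word, probability)
                 (the probability of a word is the total weight of its entries)
   - cost q a  : c(q,a). *)
Record bmdp (R : realType) (T A : finType) := Bmdp {
  enab  : T -> A -> bool;
  trans : T -> A -> seq (seq T * R);
  cost  : T -> A -> R }.

Definition wf_bmdp (R : realType) (T A : finType) (B : bmdp R T A) : Prop :=
  (forall q, exists a, enab B q a) /\
  (forall q a, enab B q a ->
     (forall bw, bw \in trans B q a -> 0 <= bw.2) /\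
     \sum_(bw <- trans B q a) bw.2 = 1) /\
  (forall q a, 0 < cost B q a).

Definition Fop (R : realType) (T A : finType) (B : bmdp R T A)
    (x : T -> \bar R) (q : T) : \bar R :=
  \big[Order.min/+oo%E]_(a : A | enab B q a)
    ((cost B q a)%:E +
      \sum_(bw <- trans B q a) ((bw.2)%:E * \sum_(t <- bw.1) x t))%E.

(* Semantics: the induced MDP on states seq T.
   A history is an initial state followed by a list of steps
   (action (i,a), resulting state); indices i are 0-based. *)
Definition hist (T A : finType) := (seq T * seq ((nat * A) * seq T))%type.

Definition last_state (T A : finType) (h : hist T A) : seq T :=
  last h.1 [seq s.2 | s <- h.2].

Definition strategy (R : realType) (T A : finType) := hist T A -> nat * A -> R.

Definition valid_strategy (R : realType) (T A : finType) (B : bmdp R T A)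
    (s : strategy R T A) : Prop :=
  forall h : hist T A, let al := last_state h in al <> [::] ->
    (forall (i : 'I_(size al)) (a : A), enab B (tnth (in_tuple al) i) a ->
        0 <= s h (val i, a)) /\
    \sum_(i < size al) \sum_(a : A | enab B (tnth (in_tuple al) i) a)
        s h (val i, a) = 1.

Definition replace_at (T : Type) (al : seq T) (i : nat) (beta : seq T) :=
  take i al ++ beta ++ drop i.+1 al.

Fixpoint ETN (R : realType) (T A : finType) (B : bmdp R T A)
    (s : strategy R T A) (N : nat) (h : hist T A) {struct N} : R :=
  match N with
  | 0 => 0
  | N'.+1 =>
    let al := last_state h in
    \sum_(i < size al) \sum_(a : A | enab B (tnth (in_tuple al) i) a)
      s h (val i, a) *
        (cost B (tnth (in_tuple al) i) a +
         \sum_(bw <- trans B (tnth (in_tuple al) i) a)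
            bw.2 * ETN B s N'
              (h.1, rcons h.2 ((val i, a), replace_at al i bw.1)))
  end.

Definition ETotalN (R : realType) (T A : finType) (B : bmdp R T A)
    (s : strategy R T A) (N : nat) (al : seq T) : R :=
  ETN B s N (al, [::]).

Definition ETotal_star_s (R : realType) (T A : finType) (B : bmdp R T A)
    (s : strategy R T A) (al : seq T) : \bar R :=
  limn (fun N => (ETotalN B s N al)%:E).

Definition ETotal_star (R : realType) (T A : finType) (B : bmdp R T A)
    (al : seq T) : \bar R :=
  ereal_inf [set ETotal_star_s B s al | s in [set s | valid_strategy B s]].

Definition cstar (R : realType) (T A : finType) (B : bmdp R T A) (q : T)
  : \bar R := ETotal_star B [:: q].

Definition xiter (R : realType) (T A : finType) (B : bmdp R T A) (k : nat)
  : T -> \bar R := iter k (Fop B) (fun _ => 0%E).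

Definition vle (R : realType) (T : finType) (x y : T -> \bar R) : Prop :=
  forall q, (x q <= y q)%E.

Definition nonneg_vec (R : realType) (T : finType) (x : T -> \bar R) : Prop :=
  forall q, (0 <= x q)%E.

From HB Require Import structures.
From mathcomp Require Import all_boot all_order all_algebra.
From mathcomp Require Import all_classical all_reals all_analysis.
From mathcomp Require Import ring lra.
Import Order.TTheory GRing.Theory Num.Theory.
Local Open Scope ring_scope.
Local Open Scope classical_set_scope.
Set Implicit Arguments. Unset Strict Implicit. Unset Printing Implicit Defensive.

(* F takes, at each type, a minimum over finitely many enabled actions of a
   nonnegative combination of the coordinates; hence F is monotone and
   continuous along nondecreasing sequences (part (a)), the iterates x^k
   increase to a fixed point x*, and it remains to show c* = x*:
   - x^k_q <= ETotal_*(q, s) for every strategy s.  Label the entities of the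
     current state with depths d_i and use the potential sum_i x^(d_i)(alpha_i).
     Expanding an entity of depth d into entities of depth d-1 lowers the
     expected potential by at most the cost paid (because x^d <= F(x^(d-1))),
     and a budget of the labels, which never increases, bounds the potential.
     Hence x^k_q <= ETotal_N + budget * Pr[alive after N steps]; the survival
     probability is at most ETotal_N / (N * cmin), so the last term vanishes.
     Taking the infimum over s gives x^k <= c*, hence x* <= c*  (part (c)).
   - c* <= c' for every nonnegative fixed point c' (part (d)): the memoryless
     strategy expanding the first entity with an action attaining the minimum
     in F(c') has N-step cost at most the sum of the c'-values of the state.
   With c' = x* this gives c* = x*, whence parts (b) and (e). *)

Lemma cvg_bigmin (R : realType) (I : Type) (r : seq I) (P : pred I)
    (f : I -> nat -> \bar R) (l : I -> \bar R) :
  (forall i, P i -> f i k @[k --> \oo] --> l i) ->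
  (\big[Order.min/+oo%E]_(i <- r | P i) f i k) @[k --> \oo] -->
     \big[Order.min/+oo%E]_(i <- r | P i) l i.
Proof.
move=> fl; elim: r => [|i r IH].
  rewrite big_nil; under eq_fun do rewrite big_nil; exact: cvg_cst.
rewrite big_cons; under eq_fun do rewrite big_cons.
case: ifP => Pi; last exact: IH.
apply: (@continuous2_cvg _ _ _ _ _ _ _ _ (fun a b : \bar R => Order.min a b)).
- exact: (@min_continuous _ (\bar R) (_, _)).
- exact: fl.
- exact: IH.
Qed.

Lemma nondecreasing_le_limn (R : realType) (u : nat -> \bar R) n :
  {homo u : i j / (i <= j)%N >-> (i <= j)%E} -> (u n <= limn u)%E.
Proof.
by move=> u_nd; rewrite (cvg_lim _ (ereal_nondecreasing_cvgn u_nd)) //;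
  apply: ereal_sup_ubound; exists n.
Qed.

Lemma nondecreasing_limn_le (R : realType) (u : nat -> \bar R) (M : \bar R) :
  {homo u : i j / (i <= j)%N >-> (i <= j)%E} ->
  (forall n, (u n <= M)%E) -> (limn u <= M)%E.
Proof.
move=> u_nd uM; rewrite (cvg_lim _ (ereal_nondecreasing_cvgn u_nd)) //.
by apply: ge_ereal_sup => _ [n _ <-].
Qed.

Section FixedPointOperator.
Variables (R : realType) (T A : finType) (B : bmdp R T A).
Hypothesis HB : wf_bmdp B.

Lemma prob_ge0 q a bw : enab B q a -> bw \in trans B q a -> 0 <= bw.2.
Proof. by case: HB => _ [H _] ea; apply: (proj1 (H q a ea)). Qed.

Lemma prob_sum1 q a : enab B q a -> \sum_(bw <- trans B q a) bw.2 = 1.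
Proof. by case: HB => _ [H _] ea; apply: (proj2 (H q a ea)). Qed.

Lemma cost_gt0 q a : 0 < cost B q a.
Proof. by case: HB => _ [_ H]. Qed.

Definition Fterm (x : T -> \bar R) (q : T) (a : A) : \bar R :=
  ((cost B q a)%:E +
    \sum_(bw <- trans B q a) ((bw.2)%:E * \sum_(t <- bw.1) x t))%E.

Lemma FopE x q : Fop B x q = \big[Order.min/+oo%E]_(a | enab B q a) Fterm x q a.
Proof. by []. Qed.

Lemma Fterm_ge0 x q a : nonneg_vec x -> enab B q a -> (0 <= Fterm x q a)%E.
Proof.
move=> x0 ea; rewrite /Fterm adde_ge0 //; first by rewrite lee_fin ltW ?cost_gt0.
rewrite big_seq; apply: sume_ge0 => bw bin; apply: mule_ge0.
  by rewrite lee_fin (prob_ge0 ea bin).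
exact: sume_ge0.
Qed.

Lemma Fterm_mono x y q a : nonneg_vec x -> vle x y -> enab B q a ->
  (Fterm x q a <= Fterm y q a)%E.
Proof.
move=> x0 xy ea; rewrite /Fterm leeD2l // big_seq [X in (_ <= X)%E]big_seq.
apply: lee_sum => bw bin; apply: lee_wpmul2l.
  by rewrite lee_fin (prob_ge0 ea bin).
exact: lee_sum.
Qed.

Lemma Fop_mono x y : nonneg_vec x -> vle x y -> vle (Fop B x) (Fop B y).
Proof.
by move=> x0 xy q; rewrite !FopE; apply: le_bigmin2 => a ea; apply: Fterm_mono.
Qed.

Lemma Fop_ge0 x : nonneg_vec x -> nonneg_vec (Fop B x).
Proof.
move=> x0 q; rewrite FopE; apply: le_bigmin; first by rewrite leey.
by move=> a ea; apply: Fterm_ge0.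
Qed.

Lemma Fop_le_Fterm x q a : enab B q a -> (Fop B x q <= Fterm x q a)%E.
Proof. by move=> ea; rewrite FopE; apply: bigmin_le_cond. Qed.

(* Since every type has an enabled action, the minimum in F is attained. *)
Lemma Fop_argmin x q : exists2 a, enab B q a & Fop B x q = Fterm x q a.
Proof.
case: HB => [H _]; case: (H q) => a0 ea0.
exists [arg min_(a < a0 | enab B q a) Fterm x q a]%O.
  by case: (Order.TotalTheory.arg_minP (fun a => Fterm x q a) ea0).
rewrite FopE (bigmin_eq_arg _ a0 _ _ ea0) // => *; exact: leey.
Qed.

Lemma Fop_fin x : (forall t, x t \is a fin_num) -> forall q, Fop B x q \is a fin_num.
Proof.
move=> xf q; case: (Fop_argmin x q) => a _ ->; rewrite /Fterm fin_numD /=.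
apply/sum_fin_numP => bw _ _; rewrite fin_numM //.
by apply/sum_fin_numP => t _ _.
Qed.

(* Part (a): continuity of F along nondecreasing sequences.  Each [Fterm] is
   a nonnegative combination of the coordinates, and min is continuous. *)
Lemma Fop_cont (y : nat -> T -> \bar R) :
  (forall k, nonneg_vec (y k)) -> (forall k, vle (y k) (y k.+1)) ->
  forall q, (fun k => Fop B (y k) q) @ \oo -->
               Fop B (fun t => limn (fun k => y k t)) q.
Proof.
move=> y0 y_nd q.
have y_cvg t : (fun k => y k t) @ \oo --> limn (fun k => y k t).
  by apply: ereal_nondecreasing_is_cvgn; apply/nondecreasing_seqP => k; apply: y_nd.
rewrite FopE; under eq_fun do rewrite FopE.
apply: cvg_bigmin => a ea; apply: cvgeD; last 2 first.
- exact: cvg_cst.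
- rewrite big_seq; under eq_fun do rewrite big_seq.
  apply: cvg_nnesum => bw bin.
    apply: nearW => k; apply: mule_ge0; first by rewrite lee_fin (prob_ge0 ea bin).
    by apply: sume_ge0 => t _; apply: y0.
  apply: cvgeZl => //; apply: cvg_nnesum => t _; last exact: y_cvg.
  by apply: nearW => k; apply: y0.
rewrite ge0_adde_def // inE; first by rewrite lee_fin ltW ?cost_gt0.
have lim_ge0 t : (0 <= limn (fun k => y k t))%E.
  by apply: (cvge_ge _ (y_cvg t)); apply: nearW => k; apply: y0.
rewrite big_seq; apply: sume_ge0 => bw bin; apply: mule_ge0.
  by rewrite lee_fin (prob_ge0 ea bin).
exact: sume_ge0.
Qed.

Lemma xiter_ge0 k : nonneg_vec (xiter B k).
Proof. by elim: k => [|k IH] q //; rewrite /xiter iterS; apply: Fop_ge0. Qed.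

Lemma xiter_nd k : vle (xiter B k) (xiter B k.+1).
Proof.
elim: k => [|k IH] q; first exact: (xiter_ge0 1 q).
by rewrite /xiter !iterS; apply: Fop_mono => //; apply: xiter_ge0.
Qed.

Lemma xiter_fin k q : xiter B k q \is a fin_num.
Proof. by elim: k q => [|k IH] q //; rewrite /xiter iterS; apply: Fop_fin. Qed.

Definition xr k q : R := fine (xiter B k q).

Lemma xrE k q : xiter B k q = (xr k q)%:E.
Proof. by rewrite /xr fineK // xiter_fin. Qed.

Lemma xr_ge0 k q : 0 <= xr k q.
Proof. by rewrite -lee_fin -xrE; apply: xiter_ge0. Qed.

(* x^d is bounded by the value of any action followed by x^(d-1)
   (trivially for d = 0, since x^0 = 0). *)
Lemma xr_step d q a : enab B q a ->
  xr d q <= cost B q a + \sum_(bw <- trans B q a) bw.2 * \sum_(t <- bw.1) xr d.-1 t.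
Proof.
move=> ea; case: d => [|d] /=.
  apply: addr_ge0; first exact: ltW (cost_gt0 _ _).
  rewrite big_seq; apply: sumr_ge0 => bw bin; apply: mulr_ge0; first exact: prob_ge0 ea bin.
  by apply: sumr_ge0 => t _; apply: xr_ge0.
rewrite -lee_fin -xrE /xiter iterS.
apply: le_trans (Fop_le_Fterm _ ea) _; rewrite /Fterm EFinD leeD2l //.
rewrite -sumEFin big_seq [X in (_ <= X)%E]big_seq; apply: lee_sum => bw bin.
rewrite EFinM -sumEFin; apply: lee_wpmul2l; first by rewrite lee_fin (prob_ge0 ea bin).
by apply: lee_sum => t _; rewrite -/(xiter B d t) xrE.
Qed.

End FixedPointOperator.

Section StrategyExpectations.
Variables (R : realType) (T A : finType) (B : bmdp R T A).
Hypothesis HB : wf_bmdp B.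

Definition oavg (q : T) (a : A) (Y : seq T * R -> R) : R :=
  \sum_(bw <- trans B q a) bw.2 * Y bw.

Lemma oavg_mono q a Y Z : enab B q a ->
  (forall bw, bw \in trans B q a -> Y bw <= Z bw) -> oavg q a Y <= oavg q a Z.
Proof.
move=> ea YZ; rewrite /oavg big_seq [leRHS]big_seq; apply: ler_sum => bw bin.
by rewrite ler_wpM2l ?(prob_ge0 HB ea bin) ?YZ.
Qed.

Lemma oavg_cst q a c : enab B q a -> oavg q a (fun=> c) = c.
Proof. by move=> ea; rewrite /oavg -mulr_suml (prob_sum1 HB ea) mul1r. Qed.

Lemma oavgD q a Y Z : oavg q a (fun bw => Y bw + Z bw) = oavg q a Y + oavg q a Z.
Proof. by rewrite /oavg -big_split; apply: eq_bigr => bw _; rewrite mulrDr. Qed.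

Lemma oavgZ q a c Y : oavg q a (fun bw => c * Y bw) = c * oavg q a Y.
Proof. by rewrite /oavg mulr_sumr; apply: eq_bigr => bw _; rewrite mulrCA. Qed.

Variable s : strategy R T A.
Hypothesis Hs : valid_strategy B s.

Definition entity (h : hist T A) (i : 'I_(size (last_state h))) : T :=
  tnth (in_tuple (last_state h)) i.
Arguments entity : clear implicits.

Definition next_hist (h : hist T A) (i : nat) (a : A) (be : seq T) : hist T A :=
  (h.1, rcons h.2 ((i, a), replace_at (last_state h) i be)).

Lemma last_next_hist h i a be :
  last_state (next_hist h i a be) = replace_at (last_state h) i be.
Proof. by rewrite /last_state /next_hist /= map_rcons last_rcons. Qed.

Definition savg (h : hist T A) (X : 'I_(size (last_state h)) -> A -> R) : R :=
  \sum_(i < size (last_state h))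
    \sum_(a : A | enab B (entity h i) a) s h (val i, a) * X i a.
Arguments savg : clear implicits.

Lemma savg_nil h X : last_state h = [::] -> savg h X = 0.
Proof.
by move=> E; apply: big1 => i _; exfalso; case: i => n; rewrite E.
Qed.

Lemma savg_mono h X Y : (forall i a, enab B (entity h i) a -> X i a <= Y i a) ->
  savg h X <= savg h Y.
Proof.
move=> XY; apply: ler_sum => i _; apply: ler_sum => a ea.
have ne : last_state h <> [::].
  by move=> E; move: (i) => [n]; rewrite E.
by rewrite ler_wpM2l ?XY ?(proj1 (Hs ne) i a ea).
Qed.

Lemma savg_cst h c : last_state h <> [::] -> savg h (fun _ _ => c) = c.
Proof.
move=> ne; rewrite -[RHS]mul1r -(proj2 (Hs ne)) mulr_suml.
by apply: eq_bigr => i _; rewrite mulr_suml.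
Qed.

Lemma savgD h X Y : savg h (fun i a => X i a + Y i a) = savg h X + savg h Y.
Proof.
rewrite /savg -big_split; apply: eq_bigr => i _.
by rewrite -big_split; apply: eq_bigr => a _; rewrite mulrDr.
Qed.

Lemma savgZ h c X : savg h (fun i a => c * X i a) = c * savg h X.
Proof.
rewrite /savg mulr_sumr; apply: eq_bigr => i _.
by rewrite mulr_sumr; apply: eq_bigr => a _; rewrite mulrCA.
Qed.

Lemma ETN_S N h : ETN B s N.+1 h =
  savg h (fun i a => cost B (entity h i) a +
     oavg (entity h i) a (fun bw => ETN B s N (next_hist h i a bw.1))).
Proof. by []. Qed.

Fixpoint survN (N : nat) (h : hist T A) : R :=
  match N with
  | 0 => (last_state h != [::])%:R
  | N'.+1 => savg h (fun i a =>
      oavg (entity h i) a (fun bw => survN N' (next_hist h i a bw.1)))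
  end.

Lemma survN_bounds N h : 0 <= survN N h <= 1.
Proof.
elim: N h => [|N IH] h /=; first by case: (_ != _); rewrite ?lexx ?ler01.
have [E|/eqP ne] := eqVneq (last_state h) [::].
  by rewrite savg_nil // lexx ler01.
apply/andP; split.
  rewrite -(savg_cst 0 ne); apply: savg_mono => i a ea.
  rewrite -(oavg_cst 0 ea); apply: oavg_mono => // bw _.
  by have /andP[] := IH (next_hist h i a bw.1).
rewrite -(savg_cst 1 ne); apply: savg_mono => i a ea.
rewrite -(oavg_cst 1 ea); apply: oavg_mono => // bw _.
by have /andP[] := IH (next_hist h i a bw.1).
Qed.

Definition cmin : R := \big[Order.min/1]_(qa : T * A) cost B qa.1 qa.2.

Lemma cmin_gt0 : 0 < cmin.
Proof.
apply: (big_ind (fun x => 0 < x)) => // [x y x0 y0|qa _]; first by rewrite lt_min x0 y0.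
exact: (cost_gt0 HB).
Qed.

Lemma cmin_le q a : cmin <= cost B q a.
Proof. exact: (bigmin_le _ (q, a)). Qed.

Lemma survN_ETN N h : cmin * N%:R * survN N h <= ETN B s N h.
Proof.
elim: N h => [|N IH] h; first by rewrite mulr0 mul0r.
rewrite ETN_S /= -savgZ; apply: savg_mono => i a ea.
rewrite -oavgZ; apply: le_trans (_ : oavg _ a (fun bw =>
    cmin + ETN B s N (next_hist h i a bw.1)) <= _).
  apply: oavg_mono => // bw _.
  have /andP[surv_ge0 surv_le1] := survN_bounds N (next_hist h i a bw.1).
  rewrite -addn1 natrD mulrDr mulr1 mulrDl addrC; apply: lerD; last exact: IH.
  by rewrite ler_piMr // ltW // cmin_gt0.
by rewrite oavgD oavg_cst // lerD2r cmin_le.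
Qed.

Lemma ETN_ge0 N h : 0 <= ETN B s N h.
Proof.
have /andP[surv_ge0 _] := survN_bounds N h.
apply: le_trans (survN_ETN N h); rewrite !mulr_ge0 //.
exact: ltW cmin_gt0.
Qed.

(* Expected costs grow with the horizon, so ETotal_* is their supremum. *)
Lemma ETN_nd N h : ETN B s N h <= ETN B s N.+1 h.
Proof.
elim: N h => [|N IH] h; first exact: ETN_ge0.
rewrite (ETN_S N.+1) ETN_S; apply: savg_mono => i a ea.
by rewrite lerD2l; apply: oavg_mono.
Qed.

Lemma ETotalN_nd al :
  {homo (fun N => (ETotalN B s N al)%:E) : i j / (i <= j)%N >-> (i <= j)%E}.
Proof. by apply/nondecreasing_seqP => N; rewrite lee_fin; apply: ETN_nd. Qed.

End StrategyExpectations.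
Arguments entity {T A} h i.
Arguments savg {R T A} B s h X.

Lemma split_at (X : Type) (x0 : X) (l : seq X) i : (i < size l)%N ->
  l = take i l ++ nth x0 l i :: drop i.+1 l.
Proof. by move=> il; rewrite -(drop_nth x0 il) cat_take_drop. Qed.

Section Potential.
Variables (R : realType) (T A : finType) (B : bmdp R T A).
Hypothesis HB : wf_bmdp B.

Definition maxbranch : nat :=
  \max_(qa : T * A) \max_(bw <- trans B qa.1 qa.2) size bw.1.

Lemma size_le_maxbranch q a bw : bw \in trans B q a -> (size bw.1 <= maxbranch)%N.
Proof.
move=> bin; apply: leq_trans (leq_bigmax (q, a)) => /=.
exact: (leq_bigmax_seq (F := fun bw : seq T * R => size bw.1) bw bin).
Qed.

(* [budget d] bounds x^d on every type and satisfies
   [maxbranch * budget d.-1 <= budget d]. *)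
Fixpoint budget (d : nat) : R :=
  if d is d'.+1 then \sum_(q : T) xr B d'.+1 q + maxbranch%:R * budget d' else 0.

Lemma budget_ge0 d : 0 <= budget d.
Proof.
elim: d => [|d IH] //=; rewrite addr_ge0 ?mulr_ge0 //.
by apply: sumr_ge0 => q _; apply: xr_ge0.
Qed.

Lemma xr_le_budget d q : xr B d q <= budget d.
Proof.
case: d => [|d] //=; rewrite -[leLHS]addr0 lerD ?mulr_ge0 ?budget_ge0 //.
by rewrite (bigD1 q) //= lerDl sumr_ge0 // => t _; apply: xr_ge0.
Qed.

Lemma budget_branch d n : (n <= maxbranch)%N -> n%:R * budget d.-1 <= budget d.
Proof.
case: d => [|d] /= nL; first by rewrite mulr0.
rewrite -[leLHS]add0r lerD ?sumr_ge0 // => [q _|]; first exact: xr_ge0.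
by rewrite ler_wpM2r ?budget_ge0 ?ler_nat.
Qed.

(* A state [al] whose entities are labelled by depths [b]: its potential is
   the sum of the x^(b_i) values of its entities, and its budget bounds it. *)
Definition potential (al : seq T) (b : seq nat) : R :=
  \sum_(tb <- zip al b) xr B tb.2 tb.1.

Definition budget_sum (b : seq nat) : R := \sum_(d <- b) budget d.

Lemma potential_le_budget al b : size al = size b -> potential al b <= budget_sum b.
Proof.
elim: al b => [|t al IH] [|d b] //= => [_|[E]].
  by rewrite /potential /budget_sum !big_nil.
by rewrite /potential /budget_sum !big_cons lerD ?xr_le_budget ?IH.
Qed.

Lemma potential_cat al1 al2 b1 b2 : size al1 = size b1 ->
  potential (al1 ++ al2) (b1 ++ b2) = potential al1 b1 + potential al2 b2.
Proof. by move=> E; rewrite /potential zip_cat // big_cat. Qed.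

Lemma potential_nseq be d : potential be (nseq (size be) d) = \sum_(t <- be) xr B d t.
Proof. by elim: be => [|t be IH]; rewrite /potential ?big_nil //= !big_cons -IH. Qed.

Lemma budget_sum_cat b1 b2 : budget_sum (b1 ++ b2) = budget_sum b1 + budget_sum b2.
Proof. exact: big_cat. Qed.

Lemma budget_sum_cons d b : budget_sum (d :: b) = budget d + budget_sum b.
Proof. exact: big_cons. Qed.

Lemma budget_sum_nseq n d : budget_sum (nseq n d) = n%:R * budget d.
Proof.
elim: n => [|n IH]; first by rewrite /budget_sum big_nil mul0r.
by rewrite budget_sum_cons IH -addn1 natrD; ring.
Qed.

Lemma potential_replace al b i be d t0 : (i < size al)%N -> size b = size al ->
  potential (replace_at al i be) (replace_at b i (nseq (size be) d))
    + xr B (nth 0%N b i) (nth t0 al i)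
  = potential al b + \sum_(t <- be) xr B d t.
Proof.
move=> il E; have ib : (i < size b)%N by rewrite E.
rewrite {3}(split_at t0 il) {3}(split_at 0%N ib) /replace_at.
rewrite !potential_cat ?size_take ?E ?size_nseq // potential_nseq.
rewrite /potential /= big_cons -/(potential _ _) -/(potential _ _); ring.
Qed.

Lemma budget_sum_replace b i n d : (i < size b)%N ->
  budget_sum (replace_at b i (nseq n d)) + budget (nth 0%N b i)
  = budget_sum b + n%:R * budget d.
Proof.
move=> ib; rewrite {3}(split_at 0%N ib) /replace_at !budget_sum_cat budget_sum_cons.
by rewrite budget_sum_nseq; ring.
Qed.

Lemma budget_sum_branch b i n : (i < size b)%N -> (n <= maxbranch)%N ->
  budget_sum (replace_at b i (nseq n (nth 0%N b i).-1)) <= budget_sum b.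
Proof.
move=> ib nL; rewrite -(lerD2r (budget (nth 0%N b i))) budget_sum_replace //.
by rewrite lerD2l budget_branch.
Qed.

Lemma potential_step al b i q a : (i < size al)%N -> size b = size al ->
  enab B (nth q al i) a ->
  potential al b <= cost B (nth q al i) a + oavg B (nth q al i) a (fun bw =>
    potential (replace_at al i bw.1) (replace_at b i (nseq (size bw.1) (nth 0%N b i).-1))).
Proof.
move=> il E ea; set q' := nth q al i; set d := nth 0%N b i.
have repE be : potential (replace_at al i be) (replace_at b i (nseq (size be) d.-1))
    = potential al b - xr B d q' + \sum_(t <- be) xr B d.-1 t.
  by apply/(addIr (xr B d q')); rewrite potential_replace //; ring.
rewrite /oavg; under eq_bigr do rewrite repE; rewrite -/(oavg _ _ _ _).
rewrite oavgD oavg_cst //; have := xr_step HB d ea; rewrite /oavg -/q'; lra.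
Qed.

End Potential.

Lemma size_replace_at (X Y : Type) (l1 : seq X) (l2 : seq Y) i be1 be2 :
  size l1 = size l2 -> size be1 = size be2 ->
  size (replace_at l1 i be1) = size (replace_at l2 i be2).
Proof. by move=> E1 E2; rewrite !size_cat !size_take !size_drop E1 E2. Qed.

Section LowerBound.
Variables (R : realType) (T A : finType) (B : bmdp R T A).
Hypothesis HB : wf_bmdp B.
Variable s : strategy R T A.
Hypothesis Hs : valid_strategy B s.

(* Each step on an
   entity of depth d relabels the produced entities with depth d-1. *)
Lemma potential_bound N h b : size b = size (last_state h) ->
  potential B (last_state h) b <= ETN B s N h + budget_sum B b * survN B s N h.
Proof.
elim: N h b => [|N IH] h b Eb.
  have [E|ne] := eqVneq (last_state h) [::].
    by move: Eb; rewrite E => /size0nil ->; rewrite /potential /budget_sum !big_nil mul0r addr0.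
  by rewrite /= ne add0r mulr1 potential_le_budget.
have [E|/eqP ne] := eqVneq (last_state h) [::].
  rewrite ETN_S /= !savg_nil // mulr0 addr0 E.
  by case: (b) => [|d b']; rewrite /potential big_nil.
rewrite ETN_S /= -savgZ -savgD -(savg_cst Hs (potential B _ b) ne).
apply: (savg_mono Hs) => i a ea; set q := entity h i.
have qE : nth q (last_state h) i = q by rewrite [RHS](tnth_nth q).
have := potential_step HB (ltn_ord i) Eb (q := q) (a := a).
rewrite qE => /(_ ea) /le_trans; apply.
rewrite -addrA lerD2l -oavgZ -oavgD; apply: oavg_mono => // bw bin.
set b' := replace_at b i _.
have Eb' : size b' = size (last_state (next_hist h i a bw.1)).
  by rewrite last_next_hist; apply: size_replace_at; rewrite ?size_nseq.
have := IH (next_hist h i a bw.1) b' Eb'; rewrite last_next_hist => /le_trans; apply.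
have /andP[surv_ge0 _] := survN_bounds HB Hs N (next_hist h i a bw.1).
rewrite lerD2l ler_wpM2r // budget_sum_branch ?Eb //.
exact: (size_le_maxbranch bin).
Qed.

(* Since every step costs at least [cmin], a run of bounded expected cost
   survives N steps with probability O(1/N). *)
Lemma survN_vanish h l g e : (forall N, ETN B s N h <= l) -> 0 <= g -> 0 < e ->
  exists N, g * survN B s N h < e.
Proof.
move=> ETN_le g0 e0; have c0 := cmin_gt0 HB.
pose N := (Num.trunc (g * l / (cmin B * e))).+1; exists N.
have NE : g * l < N%:R * (cmin B * e).
  by rewrite -ltr_pdivrMr ?mulr_gt0 //; apply: truncnS_gt.
have cN : 0 < cmin B * N%:R by rewrite mulr_gt0.
rewrite -(ltr_pM2l cN); apply: le_lt_trans (_ : g * l < _); last first.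
  by rewrite (mulrC (cmin B)) -mulrA.
rewrite mulrCA ler_wpM2l //; exact: le_trans (survN_ETN HB Hs N h) (ETN_le N).
Qed.

(* Part (c), for a fixed strategy: x^k_q <= ETotal_*(q, s).  Label the
   initial entity with depth k; if ETotal_*(q, s) is finite, the survival
   term in [potential_bound] vanishes. *)
Lemma xr_le_ETotal k q : ((xr B k q)%:E <= ETotal_star_s B s [:: q])%E.
Proof.
pose h0 : hist T A := ([:: q], [::]).
have pot N : xr B k q <= ETN B s N h0 + budget B k * survN B s N h0.
  have := potential_bound N (b := [:: k]) (h := h0) erefl.
  by rewrite /potential /budget_sum /= !big_cons !big_nil !addr0.
have ET_ge N : ((ETotalN B s N [:: q])%:E <= ETotal_star_s B s [:: q])%E.
  exact: nondecreasing_le_limn (ETotalN_nd HB Hs [:: q]).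
case E: (ETotal_star_s B s [:: q]) => [l| |]; rewrite ?leey //; last first.
  by have := ET_ge 0%N; rewrite E leeNy_eq.
have ETN_le N : ETN B s N h0 <= l by rewrite -lee_fin -E; apply: ET_ge.
rewrite lee_fin; apply/ler_addgt0Pr => e e0.
have [N survE] := survN_vanish ETN_le (budget_ge0 HB k) e0.
by apply: le_trans (pot N) _; rewrite lerD // ltW.
Qed.

End LowerBound.

Section UpperBound.
Variables (R : realType) (T A : finType) (B : bmdp R T A).
Hypothesis HB : wf_bmdp B.
Variable c' : T -> \bar R.
Hypothesis c'_ge0 : nonneg_vec c'.
Hypothesis c'_fix : c' = Fop B c'.

Lemma minaction_ex q : exists a, enab B q a && (Fop B c' q == Fterm B c' q a).
Proof. by case: (Fop_argmin HB c' q) => a ea E; exists a; rewrite ea E eqxx. Qed.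

Definition minaction (q : T) : A := xchoose (minaction_ex q).

Lemma minactionP q : enab B q (minaction q) /\ c' q = Fterm B c' q (minaction q).
Proof. by case/andP: (xchooseP (minaction_ex q)) => ea /eqP <-; rewrite -c'_fix. Qed.

Definition first_min : strategy R T A := fun h ia =>
  if last_state h is t :: _ then ((ia.1 == 0%N) && (ia.2 == minaction t))%:R else 0.

Lemma first_min_avg h t rest (F : 'I_(size (t :: rest)) -> A -> R) :
  last_state h = t :: rest ->
  \sum_(i < size (t :: rest)) \sum_(a | enab B (tnth (in_tuple (t :: rest)) i) a)
     first_min h (val i, a) * F i a = F ord0 (minaction t).
Proof.
rewrite /first_min => ->; rewrite big_ord_recl [X in _ + X]big1 ?addr0; last first.
  by move=> j _; apply: big1 => a _; rewrite mul0r.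
rewrite (bigD1 (minaction t)) /=; last by case: (minactionP t).
rewrite !eqxx mul1r big1 ?addr0 // => a /andP[_ ne].
by rewrite (negbTE ne) mul0r.
Qed.

Lemma first_min_valid : valid_strategy B first_min.
Proof.
move=> h /=; case E: (last_state h) => [//|t rest] _; split.
  by move=> i a _; rewrite /first_min E ler0n.
rewrite -(first_min_avg (fun _ _ => 1) E).
by apply: eq_bigr => i _; apply: eq_bigr => a _; rewrite mulr1.
Qed.

(* Under [first_min], the N-step expected cost from a state is at most the
   sum of the c'-values of its entities: expanding [t] replaces [c' t] by
   the cost paid plus the expected c'-value of the produced entities. *)
Lemma first_min_ETN N h : ((ETN B first_min N h)%:E <= \sum_(t <- last_state h) c' t)%E.
Proof.
elim: N h => [|N IH] h; first exact: sume_ge0.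
have {}IH i a be := IH (next_hist h i a be); move: IH.
rewrite ETN_S /savg /entity.
case E: (last_state h) => [|t rest] IH; first by rewrite big_ord0 big_nil.
rewrite (first_min_avg _ E) /oavg big_cons (_ : tnth _ ord0 = t) //.
have [ea ->] := minactionP t.
rewrite /Fterm EFinD -addeA leeD2l // -sumEFin.
have -> : (\sum_(bw <- trans B t (minaction t)) (bw.2)%:E * \sum_(u <- bw.1) c' u +
    \sum_(u <- rest) c' u =
    \sum_(bw <- trans B t (minaction t)) (bw.2)%:E * \sum_(u <- bw.1 ++ rest) c' u)%E.
  rewrite big_seq [in RHS]big_seq.
  under [in RHS]eq_bigr => bw bin.
    rewrite big_cat ge0_muleDr ?sume_ge0 //.
  over.
  rewrite big_split /=; congr (_ + _)%E.
  rewrite -ge0_sume_distrl => [|bw bin]; last by rewrite lee_fin (prob_ge0 HB ea bin).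
  by rewrite -big_seq sumEFin (prob_sum1 HB ea) mul1e.
rewrite big_seq [X in (_ <= X)%E]big_seq; apply: lee_sum => bw bin.
rewrite EFinM; apply: lee_wpmul2l; first by rewrite lee_fin (prob_ge0 HB ea bin).
by have := IH 0%N (minaction t) bw.1; rewrite last_next_hist E /replace_at /= drop0.
Qed.

Lemma cstar_le_fixpoint q : (cstar B q <= c' q)%E.
Proof.
have ET_le : (ETotal_star_s B first_min [:: q] <= c' q)%E.
  apply: nondecreasing_limn_le (ETotalN_nd HB first_min_valid [:: q]) _ => N.
  by have := first_min_ETN N ([:: q], [::]); rewrite /= big_seq1.
by apply: le_trans ET_le; apply: ereal_inf_lbound; exists first_min => //; apply: first_min_valid.
Qed.

End UpperBound.

Unset Implicit Arguments. Set Strict Implicit.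

Theorem theorem1 (R : realType) (T A : finType) (B : bmdp R T A)
  (HB : wf_bmdp B) :
  (* (a) monotone, continuous, and 0 <= x^k <= x^{k+1} *)
  ((forall x y : T -> \bar R, nonneg_vec x -> nonneg_vec y ->
      vle x y -> vle (Fop B x) (Fop B y)) /\
   (forall y : nat -> T -> \bar R,
      (forall k, nonneg_vec (y k)) -> (forall k, vle (y k) (y k.+1)) ->
      forall q, (fun k => Fop B (y k) q) @ \oo -->
                 Fop B (fun t => limn (fun k => y k t)) q) /\
   (forall k, nonneg_vec (xiter B k) /\ vle (xiter B k) (xiter B k.+1))) /\
  (* (b) *)
  cstar B = Fop B (cstar B) /\
  (* (c) *)
  (forall k, vle (xiter B k) (cstar B)) /\
  (* (d) *)
  (forall c' : T -> \bar R, nonneg_vec c' -> c' = Fop B c' -> vle (cstar B) c') /\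
  (* (e) *)
  (forall q, (fun k => xiter B k q) @ \oo --> cstar B q).
Proof.
have x_le_cstar k : vle (xiter B k) (cstar B).
  move=> q; rewrite (xrE HB); apply: le_ereal_inf_tmp => _ [s Hs <-].
  exact: xr_le_ETotal.
pose xlim t := limn (fun k => xiter B k t).
have x_nd t : {homo (fun k => xiter B k t) : i j / (i <= j)%N >-> (i <= j)%E}.
  by apply/nondecreasing_seqP => k; apply: xiter_nd.
have x_cvg t : (fun k => xiter B k t) @ \oo --> xlim t.
  exact: ereal_nondecreasing_is_cvgn.
have xlim_ge0 : nonneg_vec xlim.
  by move=> t; apply: le_trans (nondecreasing_le_limn 0 (x_nd t)).
have xlim_fix : Fop B xlim = xlim.
  apply/funext => t; have := Fop_cont HB (xiter_ge0 HB) (xiter_nd HB) (q := t).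
  have -> : (fun k => Fop B (xiter B k) t) = (fun k => xiter B k.+1 t).
    by apply/funext => k; rewrite /xiter iterS.
  rewrite (cvg_shiftS (fun k => xiter B k t)) => Fx_cvg.
  exact: cvg_unique Fx_cvg (x_cvg t).
have cstar_xlim : cstar B = xlim.
  apply/funext => t; apply/le_anti/andP; split; first exact: cstar_le_fixpoint.
  by apply: nondecreasing_limn_le => // k; apply: x_le_cstar.
split.
  split; first by move=> x y x_ge0 _; apply: Fop_mono.
  split; first by move=> y; apply: Fop_cont.
  by move=> k; split; [apply: xiter_ge0 | apply: xiter_nd].
split; first by rewrite cstar_xlim xlim_fix.
split; first exact: x_le_cstar.
split; first by move=> c' c'_ge0 c'_fix q; apply: cstar_le_fixpoint.
by move=> q; rewrite cstar_xlim; apply: x_cvg.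
Qed.
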